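(* Let $X$ be a locally compact Hausdorff, totally disconnected topological space, $G$ a discrete group, $\phi=(\phi_g,X_g,X)_{g\in G}$ a partial action of $G$ on $X$ with every $X_g$ clopen, and $K$ a field. Then the Steinberg algebra $A_K(\mathcal{G}_X)$ is $G$-graded von Neumann regular.
   Context: A partial action of $G$ (identity $\varepsilon$) on a topological space $X$ is $(\phi_g,X_g,X)_{g\in G}$ with $X_g$ open, homeomorphisms $\phi_g:X_{g^{-1}}\to X_g$, and (i) $X_\varepsilon=X$, $\phi_\varepsilon=\operatorname{id}$; (ii) $\phi_g(X_{g^{-1}}\cap X_h)=X_g\cap X_{gh}$; (iii) $\phi_g\phi_h(x)=\phi_{gh}(x)$ for $x\in X_{h^{-1}}\cap X_{h^{-1}g^{-1}}$. The groupoid $\mathcal{G}_X=\bigcup_{g}\{g\}\times X_g\subseteq G\times X$ (product topology) has range $r(g,x)=x$, domain $d(g,x)=\phi_{g^{-1}}(x)$, composition $(g,x)(h,y)=(gh,x)$ when $y=\phi_{g^{-1}}(x)$, inverse $(g^{-1},\phi_{g^{-1}}(x))$, and is $G$-graded by $(g,x)\mapsto g$. The Steinberg algebra $A_K(\mathcal{G}_X)$ consists of compactly supported locally constant functions $\mathcal{G}_X\to K$ with convolution product, graded by $A_K(\mathcal{G}_X)_g=\{f:\operatorname{supp}f\subseteq\{g\}\times X_g\}$. A graded ring is graded von Neumann regular if for each homogeneous $x$ there is $y$ with $xyx=x$. *)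

From HB Require Import structures.
From mathcomp Require Import all_boot all_algebra.
From Stdlib Require Import List ClassicalEpsilon.
Set Implicit Arguments. Unset Strict Implicit. Unset Printing Implicit Defensive.
Import GRing.Theory.
Local Open Scope ring_scope.

Section Topology.
Variable T : Type.
Variable op : (T -> Prop) -> Prop.

Definition is_topology : Prop :=
  op (fun _ => True) /\
  (forall U V, op U -> op V -> op (fun x => U x /\ V x)) /\
  (forall (F : (T -> Prop) -> Prop), (forall U, F U -> op U) ->
      op (fun x => exists U, F U /\ U x)).

Definition is_closed (C : T -> Prop) : Prop := op (fun x => ~ C x).
Definition clopen (C : T -> Prop) : Prop := op C /\ is_closed C.

Definition hausdorff : Prop :=
  forall x y, x <> y -> exists U V, op U /\ op V /\ U x /\ V y /\
     (forall z, U z -> V z -> False).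

Definition compact (S : T -> Prop) : Prop :=
  forall (I : Type) (F : I -> T -> Prop), (forall i, op (F i)) ->
    (forall x, S x -> exists i, F i x) ->
    exists l : list I, forall x, S x -> exists i, In i l /\ F i x.

Definition locally_compact : Prop :=
  forall x, exists U C, op U /\ U x /\ (forall y, U y -> C y) /\ compact C.

Definition connected (S : T -> Prop) : Prop :=
  ~ exists U V, op U /\ op V /\ (forall x, S x -> U x \/ V x) /\
      (exists x, S x /\ U x) /\ (exists x, S x /\ V x) /\
      (forall x, S x -> U x -> V x -> False).

Definition totally_disconnected : Prop :=
  forall S, connected S -> forall x y, S x -> S y -> x = y.

Definition continuous_on (f : T -> T) (A B : T -> Prop) : Prop :=
  (forall x, A x -> B (f x)) /\
  forall V, op V -> exists U, op U /\ forall x, A x -> (V (f x) <-> U x).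

Definition homeo_on (f : T -> T) (A B : T -> Prop) : Prop :=
  exists g : T -> T, continuous_on f A B /\ continuous_on g B A /\
    (forall x, A x -> g (f x) = x) /\ (forall y, B y -> f (g y) = y).
End Topology.

Definition discrete_open (G : Type) (U : G -> Prop) : Prop := True.

Definition prod_open (A B : Type) (opA : (A -> Prop) -> Prop)
  (opB : (B -> Prop) -> Prop) (W : A * B -> Prop) : Prop :=
  forall p, W p -> exists U V, opA U /\ opB V /\ U p.1 /\ V p.2 /\
     (forall q, U q.1 -> V q.2 -> W q).

Record group (G : Type) := Group {
  gmul : G -> G -> G;
  ginv : G -> G;
  gone : G;
  gmulA : forall a b c, gmul a (gmul b c) = gmul (gmul a b) c;
  gmul1g : forall a, gmul gone a = a;
  gmulVg : forall a, gmul (ginv a) a = gone }.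

Definition partial_action (X G : Type) (opX : (X -> Prop) -> Prop)
  (Gr : group G) (Xg : G -> X -> Prop) (phi : G -> X -> X) : Prop :=
  (forall g, opX (Xg g)) /\
  (forall g, homeo_on opX (phi g) (Xg (ginv Gr g)) (Xg g)) /\
  (forall x, Xg (gone Gr) x) /\ (forall x, phi (gone Gr) x = x) /\
  (forall g h y, (Xg g y /\ Xg (gmul Gr g h) y) <->
      exists x, Xg (ginv Gr g) x /\ Xg h x /\ phi g x = y) /\
  (forall g h x, Xg (ginv Gr h) x -> Xg (gmul Gr (ginv Gr h) (ginv Gr g)) x ->
      phi g (phi h x) = phi (gmul Gr g h) x).

(* fsum F is the sum of the finitely supported family F (chosen classically;
   unspecified if F is not finitely supported) *)
Definition fsum_spec (I : Type) (K : nmodType) (F : I -> K) (s : K) : Prop :=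
  exists l : list I, NoDup l /\ (forall k, F k <> 0 -> In k l) /\
     s = \sum_(k <- l) F k.

Definition fsum (I : Type) (K : nmodType) (F : I -> K) : K :=
  epsilon (inhabits 0) (fsum_spec F).

(* A function on G_X is represented as f : G -> X -> K, where f g x is the
   value at (g,x); elements of the algebra vanish outside G_X. *)
Definition steinberg (X G : Type) (opX : (X -> Prop) -> Prop)
  (Xg : G -> X -> Prop) (K : fieldType) (f : G -> X -> K) : Prop :=
  (forall g x, ~ Xg g x -> f g x = 0) /\
  (* locally constant on G_X (G_X carries the subspace topology of G x X,
     G discrete) *)
  (forall g x, Xg g x -> exists W, prod_open (@discrete_open G) opX W /\
       W (g, x) /\ forall h y, W (h, y) -> Xg h y -> f h y = f g x) /\
  compact (prod_open (@discrete_open G) opX) (fun p => f p.1 p.2 <> 0).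

Definition homogeneous (X G : Type) (K : fieldType) (g : G)
  (f : G -> X -> K) : Prop := forall h x, f h x <> 0 -> h = g.

(* convolution: (f * h)(g,x) = sum_{alpha beta = (g,x)} f(alpha) h(beta)
   = sum_k f(k,x) h(k^-1 g, phi_{k^-1} x) *)
Definition conv (X G : Type) (Gr : group G) (phi : G -> X -> X)
  (K : fieldType) (f h : G -> X -> K) : G -> X -> K :=
  fun g x => fsum (fun k => f k x * h (gmul Gr (ginv Gr k) g) (phi (ginv Gr k) x)).

Definition graded_von_neumann_regular (G R : Type) (A : R -> Prop)
  (deg : G -> R -> Prop) (mul : R -> R -> R) : Prop :=
  forall g x, A x -> deg g x -> exists y, A y /\ mul (mul x y) x = x.

(* For f homogeneous of degree g, an inner inverse y is supported on
   {g^-1} x X_{g^-1} with y(g^-1, z) = f(g, phi_g z)^-1, where 0^-1 = 0.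
   Then f * y is the indicator of the points of the unit space where f does
   not vanish, so f * y * f = f.  The function y is f^-1 transported along
   the homeomorphism (g, x) |-> (g^-1, phi_{g^-1} x) of G_X, hence it is again
   locally constant and compactly supported. *)
From HB Require Import structures.
From mathcomp Require Import all_boot all_algebra.
From Stdlib Require Import List ClassicalEpsilon Classical FunctionalExtensionality
  PropExtensionality.
Set Implicit Arguments. Unset Strict Implicit. Unset Printing Implicit Defensive.
Import GRing.Theory.
Local Open Scope ring_scope.

Section GroupTheory.
Variables (G : Type) (Gr : group G).
Local Notation "a * b" := (gmul Gr a b).
Local Notation "a ^-1" := (ginv Gr a).
Local Notation "1" := (gone Gr).

Lemma gmulgV a : a * a^-1 = 1.
Proof.
have idem : (a * a^-1) * (a * a^-1) = a * a^-1.
  by rewrite -gmulA (gmulA Gr a^-1) gmulVg gmul1g.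
by rewrite -(gmul1g Gr (a * a^-1)) -(gmulVg Gr (a * a^-1)) -gmulA idem gmulVg.
Qed.

Lemma gmulg1 a : a * 1 = a.
Proof. by rewrite -(gmulVg Gr a) gmulA gmulgV gmul1g. Qed.

Lemma ginvK a : (a^-1)^-1 = a.
Proof. by rewrite -(gmulg1 (a^-1)^-1) -(gmulVg Gr a) gmulA gmulVg gmul1g. Qed.

Lemma ginv1 : 1^-1 = 1.
Proof. by rewrite -(gmulg1 1^-1) gmulVg. Qed.

Lemma gmulKV a b : a * (a^-1 * b) = b.
Proof. by rewrite gmulA gmulgV gmul1g. Qed.
End GroupTheory.

Lemma big_NoDup_single (I : Type) (K : nmodType) (F : I -> K) (k0 : I) l :
  (forall k, k <> k0 -> F k = 0) -> NoDup l ->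
  (In k0 l -> \sum_(k <- l) F k = F k0) /\ (~ In k0 l -> \sum_(k <- l) F k = 0).
Proof.
move=> F0; elim: l => [|a l IH] l_uniq; first by split=> [[]|_]; rewrite big_nil.
inversion l_uniq as [|? ? a_notin l_uniq']; subst.
have [IHin IHnotin] := IH l_uniq'.
rewrite big_cons; split.
- move=> [ak0|k0_in]; first by subst; rewrite IHnotin // addr0.
  by rewrite IHin // F0 ?add0r // => ak0; subst.
- move=> k0_notin; rewrite IHnotin; last by move=> k0_in; apply: k0_notin; right.
  by rewrite F0 ?addr0 // => ak0; subst; apply: k0_notin; left.
Qed.

Lemma fsum_single (I : Type) (K : nmodType) (F : I -> K) (k0 : I) :
  (forall k, k <> k0 -> F k = 0) -> fsum F = F k0.
Proof.
move=> F0; rewrite /fsum.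
have spec_k0 : fsum_spec F (F k0).
  exists (k0 :: nil); split; first by constructor; [case | constructor].
  split; last by rewrite big_seq1.
  move=> k Fk; left; apply: NNPP => k0k.
  by apply: Fk; apply: F0 => kk0; apply: k0k.
have [l [l_uniq [l_supp ->]]] :=
  epsilon_spec (inhabits 0) (fsum_spec F) (ex_intro _ _ spec_k0).
have [sum_in sum_notin] := big_NoDup_single F0 l_uniq.
case: (classic (In k0 l)) => [|k0_notin]; first exact: sum_in.
rewrite sum_notin //; apply: NNPP => Fk0; apply: k0_notin; apply: l_supp.
by move=> Fk0_0; apply: Fk0; rewrite Fk0_0.
Qed.

Lemma prod_open_discreteP (G X : Type) (opX : (X -> Prop) -> Prop)
    (W : G * X -> Prop) :
  prod_open (@discrete_open G) opX W <->
  (forall h x, W (h, x) -> exists V, opX V /\ V x /\ forall y, V y -> W (h, y)).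
Proof.
split.
- move=> oW h x Wx; have [U [V [_ [oV [Uh [Vx UVW]]]]]] := oW _ Wx.
  by exists V; do 2!split=> //; move=> y Vy; apply: (UVW (h, y)).
- move=> oW [h x] Wx; have [V [oV [Vx VW]]] := oW _ _ Wx.
  exists (fun k => k = h), V; do 4!split=> //.
  by move=> [k y] /= -> /VW.
Qed.

Lemma open_preimage_on (T : Type) (op : (T -> Prop) -> Prop) (f : T -> T)
    (A B V : T -> Prop) :
  is_topology op -> op A -> continuous_on op f A B -> op V ->
  op (fun x => A x /\ V (f x)).
Proof.
move=> [_ [opI _]] oA [_ f_cont] oV; have [U [oU VU]] := f_cont V oV.
have -> : (fun x => A x /\ V (f x)) = (fun x => A x /\ U x).
  apply: functional_extensionality => x; apply: propositional_extensionality.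
  by split=> -[Ax H]; split=> //; apply/(VU x Ax).
exact: opI.
Qed.

Lemma compact_image (A B : Type) (opA : (A -> Prop) -> Prop)
    (opB : (B -> Prop) -> Prop) (S : A -> Prop) (S' : B -> Prop) (F : A -> B) :
  compact opA S ->
  (forall V, opB V -> exists U, opA U /\ forall a, S a -> (V (F a) <-> U a)) ->
  (forall a, S a -> S' (F a)) -> (forall b, S' b -> exists a, S a /\ F a = b) ->
  compact opB S'.
Proof.
move=> S_compact F_cont FS FS' I O oO O_cover.
pose U i := proj1_sig (constructive_indefinite_description _ (F_cont _ (oO i))).
have U_spec i : opA (U i) /\ forall a, S a -> (O i (F a) <-> U i a).
  by rewrite /U; case: constructive_indefinite_description.
have [l l_cover] : exists l, forall a, S a -> exists i, In i l /\ U i a.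
  apply: S_compact => [i|a Sa]; first by case: (U_spec i).
  have [i Oi] := O_cover _ (FS _ Sa).
  by exists i; apply/((U_spec i).2 a Sa).
exists l => b /FS' [a [Sa <-]]; have [i [il Ui]] := l_cover a Sa.
by exists i; split=> //; apply/((U_spec i).2 a Sa).
Qed.

Section PartialAction.
Variables (X : Type) (opX : (X -> Prop) -> Prop).
Variables (G : Type) (Gr : group G) (Xg : G -> X -> Prop) (phi : G -> X -> X).
Hypothesis pact : partial_action opX Gr Xg phi.

Lemma pact_open g : opX (Xg g).
Proof. by case: pact. Qed.

Lemma pact1 x : phi (gone Gr) x = x.
Proof. by case: pact => _ [_ [_ [phi1 _]]]. Qed.

Lemma pact_continuous g : continuous_on opX (phi g) (Xg (ginv Gr g)) (Xg g).
Proof. by case: pact => _ [phi_homeo _]; have [? []] := phi_homeo g. Qed.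

Lemma pact_continuousV g :
  continuous_on opX (phi (ginv Gr g)) (Xg g) (Xg (ginv Gr g)).
Proof. by have := pact_continuous (ginv Gr g); rewrite ginvK. Qed.

Lemma pact_mapsto g x : Xg (ginv Gr g) x -> Xg g (phi g x).
Proof. exact: (pact_continuous g).1. Qed.

Lemma pact_mapstoV g x : Xg g x -> Xg (ginv Gr g) (phi (ginv Gr g) x).
Proof. exact: (pact_continuousV g).1. Qed.

Lemma pactK g x : Xg g x -> phi g (phi (ginv Gr g) x) = x.
Proof.
case: pact => _ [_ [Xg1 [_ [_ phiM]]]] Xx.
by rewrite phiM ?gmulgV ?pact1 // ginvK // gmulgV.
Qed.

Lemma pactVK g x : Xg (ginv Gr g) x -> phi (ginv Gr g) (phi g x) = x.
Proof. by move=> /pactK; rewrite ginvK. Qed.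

Section Convolution.
Variable K : fieldType.
Local Notation conv := (conv Gr phi (K := K)).

Lemma conv_homogeneous_l g (f f' : G -> X -> K) k x : homogeneous g f ->
  conv f f' k x = f g x * f' (gmul Gr (ginv Gr g) k) (phi (ginv Gr g) x).
Proof.
move=> f_hom; apply: fsum_single => k' k'g.
by case: (classic (f k' x = 0)) => [->|/f_hom]; [rewrite mul0r|].
Qed.

Lemma conv_homogeneous g h (f f' : G -> X -> K) :
  homogeneous g f -> homogeneous h f' -> homogeneous (gmul Gr g h) (conv f f').
Proof.
move=> f_hom f'_hom k x; rewrite (conv_homogeneous_l _ _ _ f_hom) => /eqP.
by rewrite mulf_eq0 negb_or => /andP[_ /eqP/f'_hom <-]; rewrite gmulKV.
Qed.

Lemma homogeneous_steinberg_support g (f : G -> X -> K) k x :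
  steinberg opX Xg f -> homogeneous g f -> f k x <> 0 -> k = g /\ Xg g x.
Proof.
move=> [f_supp _] f_hom fkx; have kg := f_hom _ _ fkx; subst k.
by split=> //; apply: NNPP => Xx; apply: fkx; apply: f_supp.
Qed.

Definition inner_inverse g (f : G -> X -> K) : G -> X -> K := fun h z =>
  if excluded_middle_informative (h = ginv Gr g /\ Xg (ginv Gr g) z)
  then (f g (phi g z))^-1 else 0.

Lemma inner_inverseE g (f : G -> X -> K) z :
  Xg (ginv Gr g) z -> inner_inverse g f (ginv Gr g) z = (f g (phi g z))^-1.
Proof.
move=> Xz; rewrite /inner_inverse.
by case: excluded_middle_informative => //= -[]; split.
Qed.

Lemma inner_inverse_eq0 g (f : G -> X -> K) h z :
  ~ (h = ginv Gr g /\ Xg (ginv Gr g) z) -> inner_inverse g f h z = 0.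
Proof.
by move=> hz; rewrite /inner_inverse; case: excluded_middle_informative.
Qed.

Lemma homogeneous_inner_inverse g (f : G -> X -> K) :
  homogeneous (ginv Gr g) (inner_inverse g f).
Proof.
move=> h z; case: (classic (h = ginv Gr g /\ Xg (ginv Gr g) z)) => [[]//|hz].
by rewrite inner_inverse_eq0.
Qed.

Lemma conv_inner_inverse g (f : G -> X -> K) :
  steinberg opX Xg f -> homogeneous g f ->
  conv (conv f (inner_inverse g f)) f = f.
Proof.
move=> f_st f_hom.
have unit_hom : homogeneous (gone Gr) (conv f (inner_inverse g f)).
  rewrite -(gmulgV Gr g); apply: (conv_homogeneous f_hom).
  exact: homogeneous_inner_inverse.
apply: functional_extensionality => k; apply: functional_extensionality => x.
rewrite (conv_homogeneous_l _ _ _ unit_hom) ginv1 gmul1g pact1.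
case: (eqVneq (f k x) 0) => [->|/eqP fkx]; first by rewrite mulr0.
have [kg Xx] := homogeneous_steinberg_support f_st f_hom fkx; subst k.
rewrite (conv_homogeneous_l _ _ _ f_hom) gmulg1 inner_inverseE;
  last exact: pact_mapstoV.
by rewrite pactK // mulfV ?mul1r //; apply/eqP.
Qed.

Section InnerInverseSteinberg.
Hypothesis top : is_topology opX.
Variables (g : G) (f : G -> X -> K).
Hypotheses (f_st : steinberg opX Xg f) (f_hom : homogeneous g f).
Local Notation y := (inner_inverse g f).

Lemma inner_inverse_locally_constant h z : Xg h z ->
  exists W, prod_open (@discrete_open G) opX W /\ W (h, z) /\
    forall h' z', W (h', z') -> Xg h' z' -> y h' z' = y h z.
Proof.
move=> Xz; case: (classic (h = ginv Gr g)) => [hg|hg]; last first.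
  exists (fun p => p.1 = h); split; last split=> //.
    by apply/prod_open_discreteP => k x /= ->; exists (fun _ => True); case: top.
  by move=> h' z' /= -> _; rewrite !inner_inverse_eq0 // => -[].
subst h; have [_ [f_lc _]] := f_st.
have [W [oW [Wz f_const]]] := f_lc g (phi g z) (pact_mapsto Xz).
have [V [oV [Vz VW]]] := (prod_open_discreteP _ _).1 oW _ _ Wz.
exists (fun p => p.1 = ginv Gr g /\ Xg (ginv Gr g) p.2 /\ V (phi g p.2)).
split; [|split=> //].
- apply/prod_open_discreteP => k x /= [-> Vx].
  exists (fun x => Xg (ginv Gr g) x /\ V (phi g x)); split.
    exact: open_preimage_on top (pact_open _) (pact_continuous g) oV.
  by split=> // x' Vx'.
- move=> h' z' /= [-> [Xz' Vz']] _.
  have fz' := f_const g (phi g z') (VW _ Vz') (pact_mapsto Xz').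
  by rewrite !inner_inverseE // fz'.
Qed.

Lemma inner_inverse_compact :
  compact (prod_open (@discrete_open G) opX) (fun p => y p.1 p.2 <> 0).
Proof.
have [_ [_ f_compact]] := f_st.
apply: (compact_image (F := fun p => (ginv Gr g, phi (ginv Gr g) p.2)) f_compact).
- move=> V oV.
  exists (fun p => Xg g p.2 /\ V (ginv Gr g, phi (ginv Gr g) p.2)); split.
    apply/prod_open_discreteP => k x [Xx Vx].
    have [V0 [oV0 [V0x V0V]]] := (prod_open_discreteP _ _).1 oV _ _ Vx.
    exists (fun x => Xg g x /\ V0 (phi (ginv Gr g) x)); split.
      exact: open_preimage_on top (pact_open g) (pact_continuousV g) oV0.
    by split=> // x' [Xx' /V0V].
  move=> [k x] /= /(homogeneous_steinberg_support f_st f_hom) [_ Xx].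
  by split=> [|[]].
- move=> [k x] /= fkx.
  have [kg Xx] := homogeneous_steinberg_support f_st f_hom fkx; subst k.
  rewrite inner_inverseE; last exact: pact_mapstoV.
  by rewrite pactK //; apply/eqP; rewrite invr_eq0; apply/eqP.
- move=> [h z] /= yhz.
  have [hg Xz] : h = ginv Gr g /\ Xg (ginv Gr g) z.
    by apply: NNPP => hz; apply: yhz; rewrite inner_inverse_eq0.
  subst h; exists (g, phi g z); split; last by rewrite /= pactVK.
  by move=> /= fz; apply: yhz; rewrite inner_inverseE // fz invr0.
Qed.

Lemma steinberg_inner_inverse : steinberg opX Xg y.
Proof.
split; [|split].
- move=> h z Xz; rewrite inner_inverse_eq0 // => -[hg Xz']; subst h.
  exact: Xz Xz'.
- exact: inner_inverse_locally_constant.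
- exact: inner_inverse_compact.
Qed.
End InnerInverseSteinberg.
End Convolution.
End PartialAction.

(* Only the topology axioms and the openness of the X_g (part of being a
   partial action) are used. *)
Theorem mainTheorem6 (X : Type) (opX : (X -> Prop) -> Prop)
  (G : Type) (Gr : group G) (Xg : G -> X -> Prop) (phi : G -> X -> X)
  (K : fieldType) :
  is_topology opX -> hausdorff opX -> locally_compact opX ->
  totally_disconnected opX ->
  partial_action opX Gr Xg phi ->
  (forall g, clopen opX (Xg g)) ->
  graded_von_neumann_regular (steinberg opX Xg (K := K))
    (fun g f => homogeneous g f) (conv Gr phi (K := K)).
Proof.
move=> top _ _ _ pact _ g f f_st /= f_hom.
exists (inner_inverse Gr Xg phi g f); split.
- exact (steinberg_inner_inverse pact top f_st f_hom).
- exact (conv_inner_inverse pact f_st f_hom).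
Qed.
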